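(* Let $r:\mathcal T\to\mathbb N\cup\{0\}$ be a function satisfying: (1) $r(\mathscr X)=0$ iff $\mathscr X=\mathbf 0$, and $r(\mathscr X)=1$ iff $\mathscr X$ is a rank-one tensor; (2) $r$ is constant on equivalence classes of $\sim$; (3) if $\mathscr X\in\mathbb R^{I_1\times\cdots\times I_N}$ has exactly two modes $n_1<n_2$ with $I_{n_1}>1$ and $I_{n_2}>1$, and $\mathbf X\in\mathbb R^{I_{n_1}\times I_{n_2}}$ is the matrix associated to $\mathscr X$, then $r(\mathscr X)=\operatorname{rank}(\mathbf X)$; (4) if $\mathscr X\in\mathbb R^{I_1\times\cdots\times I_N}$ is nonzero, not rank-one, and has at least three modes $n$ with $I_n>1$, then $r(\mathscr X)=\max\{I_1,\dots,I_N\}$. Then $r$ is a QZC rank function.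
   Context: $\mathcal T$ is the collection of all real tensors (of all orders $N\ge1$ and all sizes). A rank-one tensor is one of the form $x_{i_1\cdots i_N}=a^{(1)}_{i_1}\cdots a^{(N)}_{i_N}$ with all $\mathbf a^{(n)}$ nonzero vectors. $\mathscr I_{M,N}$ is the order-$N$ tensor of size $M\times\cdots\times M$ with $1$ in positions $(i,\dots,i)$ and $0$ elsewhere. A subtensor of $\mathscr X\in\mathbb R^{I_1\times\cdots\times I_N}$ is a tensor $\mathscr Y\in\mathbb R^{J_1\times\cdots\times J_N}$ with $y_{j_1\cdots j_N}=x_{i_{1j_1}\cdots i_{Nj_N}}$ for some indices $1\le i_{n1}<\cdots<i_{nJ_n}\le I_n$. For $\pi\in S_N$, the mode-permutation of $\mathscr X$ is the tensor $\mathscr Y$ with $y_{i_1\cdots i_N}=x_{i_{\pi(1)}\cdots i_{\pi(N)}}$. The relation $\sim$ is the smallest equivalence relation on $\mathcal T$ with $\mathscr X\sim\alpha\mathscr X$ for all $\alpha\in\mathbb R\setminus\{0\}$ and $\mathscr X\sim\mathscr Y$ whenever $\mathscr Y$ is a mode-permutation of $\mathscr X$. A QZC rank function is a function $s:\mathcal T\to\mathbb N\cup\{0\}$ such that: (QZC1) $s(\mathscr X)=0$ iff $\mathscr X=\mathbf 0$, and $s(\mathscr X)=1$ iff $\mathscr X$ is rank-one; (QZC2) $s(\mathscr I_{M,N})=M$ whenever $N\ge2$; (QZC3) if $\mathscr X\in\mathbb R^{I_1\times I_2\times1\times\cdots\times1}$ then $s(\mathscr X)$ equals the rank of the corresponding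 $I_1\times I_2$ matrix; (QZC4) $s(\alpha\mathscr X)=s(\mathscr X)$ for $\alpha\ne0$; (QZC5) $s$ is invariant under mode-permutations; (QZC6) $s(\mathscr Y)\le s(\mathscr X)$ whenever $\mathscr Y$ is a subtensor of $\mathscr X$. *)

From mathcomp Require Import all_boot all_algebra all_fingroup.
From mathcomp Require Import reals.
Set Implicit Arguments. Unset Strict Implicit. Unset Printing Implicit Defensive.
Import GRing.Theory Num.Theory.
Local Open Scope ring_scope.

(* Multi-indices of a tensor with size list s (order = size s), 0-based. *)
Definition tidx (s : seq nat) :=
  {dffun forall n : 'I_(size s), 'I_(nth 0%N s n)}.

Record tensor (R : realType) := Tensor {
  tsz : seq nat;
  tval : {ffun tidx tsz -> R};
  tszP : (0 < size tsz)%N && all (leq 1) tsz }.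

Section Defs.
Variable R : realType.
Implicit Types X Y : tensor R.

Definition tord X : nat := size (tsz X).
Definition tdim X (n : nat) : nat := nth 0%N (tsz X) n.

(* entry at a nat-valued multi-index f (0-based); 0 if out of bounds *)
Definition tentry X (f : nat -> nat) : R :=
  if [pick i : tidx (tsz X) | [forall n, nat_of_ord (i n) == f (nat_of_ord n)]]
  is Some i then tval X i else 0.

Definition inbounds X (f : nat -> nat) : Prop :=
  forall n, (n < tord X)%N -> (f n < tdim X n)%N.

Definition is_zero_tensor X : Prop := forall i, tval X i = 0.

Definition is_rank_one X : Prop :=
  exists a : nat -> nat -> R,
    (forall n, (n < tord X)%N -> exists2 k, (k < tdim X n)%N & a n k != 0) /\
    (forall i, tval X i = \prod_(n < size (tsz X)) a n (nat_of_ord (i n))).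

Definition is_scaling (alpha : R) X Y : Prop :=
  tsz Y = tsz X /\ forall f, tentry Y f = alpha * tentry X f.

Definition permnat (N : nat) (p : {perm 'I_N}) (k : nat) : nat :=
  if insub k is Some i then nat_of_ord (p i) else k.

Definition is_modeperm X Y : Prop :=
  exists p : {perm 'I_(tord X)},
    tord Y = tord X /\
    (forall k, (k < tord X)%N -> tdim Y (permnat p k) = tdim X k) /\
    (forall f, tentry Y f = tentry X (fun k => f (permnat p k))).

Inductive tsim : tensor R -> tensor R -> Prop :=
  | tsim_refl X : tsim X X
  | tsim_sym X Y : tsim X Y -> tsim Y X
  | tsim_trans X Y Z : tsim X Y -> tsim Y Z -> tsim X Z
  | tsim_scale X Y alpha : alpha != 0 -> is_scaling alpha X Y -> tsim X Y
  | tsim_perm X Y : is_modeperm X Y -> tsim X Y.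

Definition is_subtensor Y X : Prop :=
  tord Y = tord X /\
  exists sel : nat -> nat -> nat,
    (forall n, (n < tord X)%N ->
       (forall j k, (j < k)%N -> (k < tdim Y n)%N -> (sel n j < sel n k)%N) /\
       (forall j, (j < tdim Y n)%N -> (sel n j < tdim X n)%N)) /\
    (forall f, inbounds Y f -> tentry Y f = tentry X (fun n => sel n (f n))).

Definition is_identity_tensor X (M N : nat) : Prop :=
  tsz X = nseq N M /\
  forall f, inbounds X f ->
    tentry X f = if [forall n : 'I_N, f n == f 0%N] then 1 else 0.

Definition is_QZC (s : tensor R -> nat) : Prop :=
  (forall X, s X = 0%N <-> is_zero_tensor X) /\
  (forall X, s X = 1%N <-> is_rank_one X) /\
  (forall X M N, (2 <= N)%N -> is_identity_tensor X M N -> s X = M) /\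
  (forall X I1 I2 k (A : 'M[R]_(I1, I2)),
     tsz X = [:: I1, I2 & nseq k 1%N] ->
     (forall (i : 'I_I1) (j : 'I_I2),
        A i j = tentry X (fun n => if n == 0%N then nat_of_ord i
                                   else if n == 1%N then nat_of_ord j else 0%N)) ->
     s X = \rank A) /\
  (forall X Y alpha, alpha != 0 -> is_scaling alpha X Y -> s Y = s X) /\
  (forall X Y, is_modeperm X Y -> s Y = s X) /\
  (forall X Y, is_subtensor Y X -> (s Y <= s X)%N).

End Defs.

From Pilot Require Import Defs.
From mathcomp Require Import all_boot all_algebra all_fingroup.
From mathcomp Require Import reals.
From Stdlib Require Import Classical.
Import GRing.Theory Num.Theory.
Set Implicit Arguments. Unset Strict Implicit. Unset Printing Implicit Defensive.
Local Open Scope ring_scope.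

(* A nonzero tensor that is not rank-one has two modes of size > 1.  If it has
   no third one, it lives on the matrix of those two modes, so (3) computes r;
   otherwise (4) does.  Hence I_{M,2} and the tensors of shape I1 x I2 x 1 x ...
   are handled by (3), I_{M,N} with N >= 3 and M >= 2 by (4).  A subtensor Y
   of X has every mode at most the corresponding mode of X, hence no more
   modes of size > 1 and a smaller maximal mode; when both have exactly the
   same two big modes, the matrix of Y is a submatrix of the matrix of X. *)

Lemma three_le_count (T : Type) (x0 : T) (P : pred T) s a b c :
  (a < size s)%N -> (b < size s)%N -> (c < size s)%N ->
  a != b -> a != c -> b != c ->
  P (nth x0 s a) -> P (nth x0 s b) -> P (nth x0 s c) -> (3 <= count P s)%N.
Proof.
move=> a_s b_s c_s ab ac bc Pa Pb Pc.
rewrite -sum1_count (big_nth x0) big_mkord.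
rewrite (bigD1 (Ordinal a_s)) //= (bigD1 (Ordinal b_s)) /=; last first.
  by rewrite Pb -(inj_eq val_inj) /= eq_sym ab.
rewrite (bigD1 (Ordinal c_s)) /=; last first.
  by rewrite Pc -!(inj_eq val_inj) /= eq_sym ac eq_sym bc.
by rewrite !add1n !ltnS.
Qed.

Lemma leq_count_nth (T : Type) (x0 : T) (P : pred T) s t : size s = size t ->
  (forall i, (i < size s)%N -> P (nth x0 s i) -> P (nth x0 t i)) ->
  (count P s <= count P t)%N.
Proof.
elim: s t => [|x s IH] [|y t] //= [st] Pst.
apply: leq_add; last by apply: IH => // i; exact: (Pst i.+1).
by have := Pst 0%N isT; case: (P x) => //= ->.
Qed.

Lemma leq_bigmax_nth (s t : seq nat) : size s = size t ->
  (forall i, (i < size s)%N -> (nth 0 s i <= nth 0 t i)%N) ->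
  (\max_(k <- s) k <= \max_(k <- t) k)%N.
Proof.
move=> st le_st; apply/bigmax_leqP_seq => _ /(nthP 0%N) [i i_s <-] _.
apply: leq_trans (le_st i i_s) _; apply: leq_bigmax_seq => //.
by rewrite mem_nth // -st.
Qed.

Lemma bigmax_nseq N M : (0 < N)%N -> (\max_(k <- nseq N M) k)%N = M.
Proof. by case: N => // N _; rewrite big_nseq; elim: N => [|N /= ->]; rewrite /= ?maxn0 ?maxnn. Qed.

Lemma increasing_bounded_leq (sel : nat -> nat) d D :
  (forall j k, (j < k)%N -> (k < d)%N -> (sel j < sel k)%N) ->
  (forall j, (j < d)%N -> (sel j < D)%N) -> (d <= D)%N.
Proof.
move=> incr bnd; have le_sel j : (j < d)%N -> (j <= sel j)%N.
  elim: j => // j IH jd.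
  exact: leq_ltn_trans (IH (ltnW jd)) (incr j j.+1 (ltnSn j) jd).
by case: d incr bnd le_sel => // d _ bnd le_sel; exact: leq_ltn_trans (le_sel d _) (bnd d _).
Qed.

Lemma mxrank_mxsub (F : fieldType) m n m' n' (f : 'I_m' -> 'I_m) (g : 'I_n' -> 'I_n)
  (A : 'M[F]_(m, n)) : (\rank (mxsub f g A) <= \rank A)%N.
Proof.
have -> : mxsub f g A = rowsub f 1%:M *m (A *m colsub g 1%:M).
  rewrite mul_rowsub_mx mulmx_colsub mulmx1 mul1mx.
  by apply/matrixP => i j; rewrite !mxE.
exact: leq_trans (mxrankM_maxr _ _) (mxrankM_maxl _ _).
Qed.

Section Tensors.
Variable R : realType.
Implicit Types X Y : tensor R.

Definition idx_fun (s : seq nat) (i : tidx s) : nat -> nat :=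
  fun k => if (insub k : option 'I_(size s)) is Some n then nat_of_ord (i n) else 0%N.

Lemma idx_funE s (i : tidx s) (n : 'I_(size s)) : idx_fun i n = i n.
Proof. by rewrite /idx_fun valK. Qed.

Lemma eq_tentry X f g : (forall n, (n < tord X)%N -> f n = g n) ->
  tentry X f = tentry X g.
Proof.
move=> fg; rewrite /tentry; congr (if _ is Some i then _ else _).
by apply: eq_pick => i; apply: eq_forallb => n; rewrite fg.
Qed.

Lemma tentry_idx_fun X (i : tidx (tsz X)) : tentry X (idx_fun i) = Defs.tval X i.
Proof.
rewrite /tentry; case: pickP => [j /forallP ji | /(_ i) /forallP []]; last first.
  by move=> n; rewrite idx_funE.
congr (Defs.tval X _); apply/ffunP => n; apply/val_inj.
by move/eqP: (ji n); rewrite idx_funE.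
Qed.

Lemma idx_fun_inbounds X (i : tidx (tsz X)) : inbounds X (idx_fun i).
Proof. by move=> n nX; rewrite -[n]/(nat_of_ord (Ordinal nX)) idx_funE. Qed.

Lemma inbounds_idx_fun X f : inbounds X f ->
  exists i : tidx (tsz X), forall n, (n < tord X)%N -> idx_fun i n = f n.
Proof.
move=> fX; exists [ffun n : 'I_(size (tsz X)) => Ordinal (fX n (ltn_ord n))].
by move=> n nX; rewrite -[n]/(nat_of_ord (Ordinal nX)) idx_funE ffunE.
Qed.

Lemma tord_gt0 X : (0 < tord X)%N.
Proof. by case/andP: (tszP X). Qed.

Lemma tdim_gt0 X n : (n < tord X)%N -> (0 < tdim X n)%N.
Proof. by case/andP: (tszP X) => _ /(all_nthP 0%N); apply. Qed.

Lemma zero_tensor_tentry X f : is_zero_tensor X -> tentry X f = 0.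
Proof. by move=> X0; rewrite /tentry; case: pickP => // i _; rewrite X0. Qed.

Lemma is_zero_tensorP X : is_zero_tensor X <-> forall f, inbounds X f -> tentry X f = 0.
Proof.
split=> [X0 f _|X0 i]; first exact: zero_tensor_tentry.
by rewrite -tentry_idx_fun; apply/X0/idx_fun_inbounds.
Qed.

Lemma nonzero_tentry X : ~ is_zero_tensor X -> exists2 f, inbounds X f & tentry X f != 0.
Proof.
move=> NZ; apply: NNPP => none; apply/NZ/is_zero_tensorP => f fX.
by apply/eqP; apply: contra_notT none => nz; exists f.
Qed.

Lemma rank_oneP X : is_rank_one X <-> exists a : nat -> nat -> R,
    (forall n, (n < tord X)%N -> exists2 k, (k < tdim X n)%N & a n k != 0) /\
    (forall f, inbounds X f -> tentry X f = \prod_(n < tord X) a n (f n)).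
Proof.
split=> -[a [a_nz Xa]]; exists a; split=> //.
  move=> f fX; have [i fi] := inbounds_idx_fun fX.
  rewrite -(@eq_tentry _ (idx_fun i)) // tentry_idx_fun Xa.
  by apply: eq_bigr => n _; rewrite -fi // idx_funE.
move=> i; rewrite -tentry_idx_fun Xa; last exact: idx_fun_inbounds.
by apply: eq_bigr => n _; rewrite idx_funE.
Qed.

(* Each factor of the product at a mixed index is a factor at f or at g. *)
Lemma rank_one_mix_neq0 X f g h : is_rank_one X ->
  inbounds X f -> inbounds X g -> (forall n, h n = f n \/ h n = g n) ->
  tentry X f != 0 -> tentry X g != 0 -> tentry X h != 0.
Proof.
case/rank_oneP => a [_ Xa] fX gX fgh.
have hX : inbounds X h by move=> n nX; case: (fgh n) => ->; [exact: fX | exact: gX].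
rewrite Xa // Xa // Xa // => /prodf_neq0 af /prodf_neq0 ag.
by apply/prodf_neq0 => n _; case: (fgh n) => ->; [exact: af | exact: ag].
Qed.

Definition flat_outside X n1 n2 : Prop :=
  forall n, (n < tord X)%N -> n != n1 -> n != n2 -> (tdim X n <= 1)%N.

Definition mode_index (n1 n2 i j : nat) : nat -> nat :=
  fun n => if n == n1 then i else if n == n2 then j else 0%N.

Definition mode_mx X n1 n2 : 'M[R]_(tdim X n1, tdim X n2) :=
  \matrix_(i, j) tentry X (mode_index n1 n2 i j).

Definition big_mode_count X : nat := count (fun k => 1 < k)%N (tsz X).

Lemma mode_index_inbounds X n1 n2 i j :
  (i < tdim X n1)%N -> (j < tdim X n2)%N -> inbounds X (mode_index n1 n2 i j).
Proof.
rewrite /mode_index => i1 j2 n nX.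
by case: eqP => [->//|_]; case: eqP => [->//|_]; exact: tdim_gt0.
Qed.

Lemma tentry_mode_index X n1 n2 f : flat_outside X n1 n2 -> inbounds X f ->
  tentry X f = tentry X (mode_index n1 n2 (f n1) (f n2)).
Proof.
move=> flatX fX; apply: eq_tentry => n nX; rewrite /mode_index.
case: eqP => [->//|/eqP n1']; case: eqP => [->//|/eqP n2'].
by have := leq_trans (fX n nX) (flatX n nX n1' n2'); rewrite ltnS leqn0 => /eqP.
Qed.

Lemma mode_mx_eq0 X n1 n2 : (n1 < tord X)%N -> (n2 < tord X)%N ->
  flat_outside X n1 n2 -> mode_mx X n1 n2 = 0 -> is_zero_tensor X.
Proof.
move=> n1X n2X flatX A0; apply/is_zero_tensorP => f fX.
rewrite (tentry_mode_index flatX fX).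
by have := congr1 (fun A : 'M_(_, _) => A (Ordinal (fX n1 n1X)) (Ordinal (fX n2 n2X))) A0;
  rewrite !mxE.
Qed.

Lemma flat_rank_one X m : (m < tord X)%N -> flat_outside X m m ->
  ~ is_zero_tensor X -> is_rank_one X.
Proof.
move=> mX flatX NZ; apply/rank_oneP.
exists (fun n k => if n == m then tentry X (mode_index m m k k) else 1); split.
  have [f fX fnz] := nonzero_tentry NZ.
  move=> n nX; case: eqP => [->|_]; last by exists 0%N; [exact: tdim_gt0 | exact: oner_neq0].
  by exists (f m); [exact: fX | rewrite -tentry_mode_index].
move=> f fX; rewrite (bigD1 (Ordinal mX)) //= eqxx big1 ?mulr1; first exact: tentry_mode_index.
by move=> n; rewrite -(inj_eq val_inj) => /negbTE ->.
Qed.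

Lemma big_mode_other X m : (m < tord X)%N -> ~ is_zero_tensor X -> ~ is_rank_one X ->
  exists n, [/\ (n < tord X)%N, n != m & (1 < tdim X n)%N].
Proof.
move=> mX NZ NR1; apply: NNPP => none; apply/NR1/(flat_rank_one mX) => // n nX nm _.
by rewrite leqNgt; apply: contra_notN none => big; exists n.
Qed.

Lemma two_big_modes X : ~ is_zero_tensor X -> ~ is_rank_one X ->
  exists n1 n2, [/\ (n1 < n2)%N, (n2 < tord X)%N, (1 < tdim X n1)%N & (1 < tdim X n2)%N].
Proof.
move=> NZ NR1; have [p [pX _ bp]] := big_mode_other (tord_gt0 X) NZ NR1.
have [q [qX qp bq]] := big_mode_other pX NZ NR1.
case: ltngtP qp => // [qp|pq] _; [by exists q, p | by exists p, q].
Qed.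

Lemma flat_outside_or_three_big_modes X n1 n2 : n1 != n2 ->
  (n1 < tord X)%N -> (n2 < tord X)%N -> (1 < tdim X n1)%N -> (1 < tdim X n2)%N ->
  flat_outside X n1 n2 \/ (3 <= big_mode_count X)%N.
Proof.
move=> n12 n1X n2X b1 b2.
have [[n [nX n1' n2' bn]]|none] :=
  classic (exists n, [/\ (n < tord X)%N, n != n1, n != n2 & 1 < tdim X n]%N).
  by right; apply: (three_le_count (x0 := 0%N) (a := n1) (b := n2) (c := n)); rewrite // eq_sym.
by left=> n nX n1' n2'; rewrite leqNgt; apply: contra_notN none => bn; exists n.
Qed.

Section IdentityTensor.
Variables (X : tensor R) (M N : nat).
Hypothesis X_id : is_identity_tensor X M N.

Lemma identity_tord : tord X = N.
Proof. by case: X_id => X_sz _; rewrite /tord X_sz size_nseq. Qed.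

Lemma identity_tdim n : (n < N)%N -> tdim X n = M.
Proof. by case: X_id => X_sz _; rewrite /tdim X_sz nth_nseq => ->. Qed.

Lemma identity_dim_gt0 : (0 < M)%N.
Proof.
have N_gt0 : (0 < N)%N by rewrite -identity_tord tord_gt0.
by rewrite -(identity_tdim N_gt0) tdim_gt0 ?identity_tord.
Qed.

Lemma identity_inbounds f : (forall n, (n < N)%N -> (f n < M)%N) -> inbounds X f.
Proof. by move=> fM n; rewrite identity_tord => nN; rewrite identity_tdim ?fM. Qed.

Lemma identity_tentry_const c : (c < M)%N -> tentry X (fun=> c) = 1.
Proof.
case: X_id => _ X_ent cM; rewrite X_ent; last exact: identity_inbounds.
by case: (@forallP _ (fun=> c == c)) => // -[].
Qed.

Lemma identity_nonzero : ~ is_zero_tensor X.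
Proof.
move/(zero_tensor_tentry (fun=> 0%N))/eqP.
by rewrite identity_tentry_const ?oner_eq0 ?identity_dim_gt0.
Qed.

Lemma identity_rank_one : M = 1%N -> is_rank_one X.
Proof.
move=> M1; apply: (flat_rank_one (tord_gt0 X)) identity_nonzero.
by move=> n; rewrite identity_tord => nN _ _; rewrite identity_tdim ?M1.
Qed.

(* The index (0, 1, ..., 1) is off the diagonal, yet each of its coordinates
   is a coordinate of the diagonal index (0, ..., 0) or (1, ..., 1). *)
Lemma identity_not_rank_one : (1 < M)%N -> (1 < N)%N -> ~ is_rank_one X.
Proof.
case: X_id => _ X_ent M_gt1 N_gt1 X1.
pose h n := if n == 0%N then 0%N else 1%N.
have h_mix n : h n = 0%N \/ h n = 1%N by rewrite /h; case: eqP; [left | right].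
have X_h : tentry X h = 0.
  rewrite X_ent; last first.
    by apply: identity_inbounds => n _; rewrite /h; case: eqP => _; rewrite ?identity_dim_gt0.
  by case: forallP => // /(_ (Ordinal N_gt1)).
have := rank_one_mix_neq0 X1 (identity_inbounds (fun _ _ => identity_dim_gt0))
  (identity_inbounds (fun _ _ => M_gt1)) h_mix.
by rewrite !identity_tentry_const ?identity_dim_gt0 // X_h oner_neq0 eqxx => /(_ isT isT).
Qed.

Lemma identity_mx : N = 2%N ->
  forall i j : 'I_M, (1%:M : 'M[R]_M) i j = tentry X (mode_index 0 1 i j).
Proof.
move=> N2 i j; rewrite mxE; case: X_id => _; rewrite N2 => X_ent.
rewrite X_ent; last by apply: identity_inbounds; rewrite N2 => -[|[|n]] //= _; exact: ltn_ord.
case: forallP => [/(_ ord_max) /eqP /val_inj -> | neq]; first by rewrite eqxx.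
by case: eqP => // ij; case: neq => -[[|[|n]] //= _]; rewrite ij.
Qed.

End IdentityTensor.

Section Subtensor.
Variables Y X : tensor R.
Hypothesis YX : is_subtensor Y X.

Lemma subtensor_tdim n : (n < tord X)%N -> (tdim Y n <= tdim X n)%N.
Proof. by case: YX => _ [sel [sel_ok _]] /sel_ok []; apply: increasing_bounded_leq. Qed.

Lemma subtensor_big_mode_count : (big_mode_count Y <= big_mode_count X)%N.
Proof.
case: YX => YXord _; apply: leq_count_nth => // n nY bn.
by apply: leq_trans bn (subtensor_tdim _); rewrite -YXord.
Qed.

Lemma subtensor_bigmax : (\max_(k <- tsz Y) k <= \max_(k <- tsz X) k)%N.
Proof. by case: YX => YXord _; apply: leq_bigmax_nth => // n nY; rewrite subtensor_tdim -?YXord. Qed.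

Lemma subtensor_nonzero : ~ is_zero_tensor Y -> ~ is_zero_tensor X.
Proof.
case: YX => _ [sel [_ Ysel]] /nonzero_tentry [f fY].
by rewrite Ysel // => /eqP nz X0; apply/nz/zero_tensor_tentry.
Qed.

Lemma subtensor_rank_one : ~ is_zero_tensor Y -> is_rank_one X -> is_rank_one Y.
Proof.
case: YX => YXord [sel [sel_ok Ysel]] NZ /rank_oneP [a [_ Xa]].
have Ya f : inbounds Y f -> tentry Y f = \prod_(n < tord Y) a n (sel n (f n)).
  move=> fY; rewrite Ysel // Xa ?YXord // => n nX.
  by case: (sel_ok n nX) => _; apply; apply: fY; rewrite YXord.
apply/rank_oneP; exists (fun n k => a n (sel n k)); split=> //.
have [f fY] := nonzero_tentry NZ; rewrite Ya // => /prodf_neq0 af n nY.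
by exists (f n); [exact: fY | exact: (af (Ordinal nY))].
Qed.

Lemma subtensor_mode_mx_rank n1 n2 : (n1 < tord X)%N -> (n2 < tord X)%N ->
  flat_outside X n1 n2 -> (\rank (mode_mx Y n1 n2) <= \rank (mode_mx X n1 n2))%N.
Proof.
case: YX => YXord [sel [sel_ok Ysel]] n1X n2X flatX.
have selX n : (n < tord X)%N -> forall k, (k < tdim Y n)%N -> (sel n k < tdim X n)%N.
  by case/sel_ok.
pose fi (i : 'I_(tdim Y n1)) := Ordinal (selX n1 n1X i (ltn_ord i)).
pose fj (j : 'I_(tdim Y n2)) := Ordinal (selX n2 n2X j (ltn_ord j)).
suff -> : mode_mx Y n1 n2 = mxsub fi fj (mode_mx X n1 n2) by exact: mxrank_mxsub.
apply/matrixP => i j; rewrite !mxE Ysel; last exact: mode_index_inbounds.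
apply: eq_tentry => n nX; rewrite /mode_index /=.
case: eqP => [->//|/eqP n1']; case: eqP => [->//|/eqP n2'].
have := leq_trans (selX n nX 0%N (tdim_gt0 _)) (flatX n nX n1' n2').
by rewrite YXord ltnS leqn0 => /(_ nX) /eqP.
Qed.

End Subtensor.

End Tensors.

Section RankFunction.
Variables (R : realType) (r : tensor R -> nat).
Hypothesis r0 : forall X, r X = 0%N <-> is_zero_tensor X.
Hypothesis r1 : forall X, r X = 1%N <-> is_rank_one X.
Hypothesis r_matrix : forall X n1 n2 (A : 'M[R]_(tdim X n1, tdim X n2)),
  (n1 < n2)%N -> (n2 < tord X)%N ->
  (1 < tdim X n1)%N -> (1 < tdim X n2)%N ->
  (forall n, (n < tord X)%N -> n != n1 -> n != n2 -> (tdim X n <= 1)%N) ->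
  (forall (i : 'I_(tdim X n1)) (j : 'I_(tdim X n2)),
     A i j = tentry X (fun n => if n == n1 then nat_of_ord i
                                else if n == n2 then nat_of_ord j else 0%N)) ->
  r X = \rank A.
Hypothesis r_max : forall X, ~ is_zero_tensor X -> ~ is_rank_one X ->
  (3 <= count (fun k => 1 < k)%N (tsz X))%N -> r X = (\max_(k <- tsz X) k)%N.

Lemma r_flat_outside X n1 n2 : (n1 < n2)%N -> (n2 < tord X)%N ->
  flat_outside X n1 n2 -> r X = \rank (mode_mx X n1 n2).
Proof.
move=> n12 n2X flatX; have n1X := ltn_trans n12 n2X.
have [X0|NZ] := classic (is_zero_tensor X).
  suff -> : mode_mx X n1 n2 = 0 by rewrite mxrank0; apply/r0.
  by apply/matrixP => i j; rewrite !mxE zero_tensor_tentry.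
have A_nz : mode_mx X n1 n2 != 0 by apply/eqP => /(mode_mx_eq0 n1X n2X flatX).
have rank_one_case m : (m < tord X)%N -> flat_outside X m m ->
    (minn (tdim X n1) (tdim X n2) <= 1)%N -> r X = \rank (mode_mx X n1 n2).
  move=> mX flatm small; rewrite (proj2 (r1 X) (flat_rank_one mX flatm NZ)).
  apply/eqP; rewrite eqn_leq lt0n mxrank_eq0 A_nz.
  by apply: leq_trans small; rewrite leq_min rank_leq_row rank_leq_col.
have [b1|s1] := ltnP 1 (tdim X n1); last first.
  apply: (rank_one_case n2) => //; last by rewrite geq_min s1.
  by move=> n nX n2' _; case: (eqVneq n n1) => [->|n1']; [exact: s1 | exact: flatX].
have [b2|s2] := ltnP 1 (tdim X n2); last first.
  apply: (rank_one_case n1) => //; last by rewrite geq_min s2 orbT.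
  by move=> n nX n1' _; case: (eqVneq n n2) => [->|n2']; [exact: s2 | exact: flatX].
by apply: r_matrix => // i j; rewrite mxE.
Qed.

Lemma r_matrix_shaped X I1 I2 k (A : 'M[R]_(I1, I2)) :
  tsz X = [:: I1, I2 & nseq k 1%N] ->
  (forall (i : 'I_I1) (j : 'I_I2),
     A i j = tentry X (fun n => if n == 0%N then nat_of_ord i
                                else if n == 1%N then nat_of_ord j else 0%N)) ->
  r X = \rank A.
Proof.
(* Once X is destructed, tdim X 0 and tdim X 1 compute to I1 and I2, so A and
   mode_mx X 0 1 have the same type. *)
case: X => s x sP /= s_eq; subst s; set X := Tensor _ _ => XA.
have -> : A = mode_mx X 0%N 1%N by apply/matrixP => i j; rewrite XA mxE.
apply: (r_flat_outside (n1 := 0%N) (n2 := 1%N)) => //.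
by case=> [|[|n]] //; rewrite /tord /tdim /= size_nseq !ltnS nth_nseq => ->.
Qed.

Lemma r_identity X M N : (2 <= N)%N -> is_identity_tensor X M N -> r X = M.
Proof.
move=> N_ge2 X_id.
have [M_le1|M_gt1] := leqP M 1.
  have M1 : M = 1%N by apply/anti_leq; rewrite M_le1 (identity_dim_gt0 X_id).
  by rewrite M1; apply/r1/(identity_rank_one X_id).
have X_sz : tsz X = nseq N M by case: X_id.
have [N_gt2|N_le2] := ltnP 2 N.
  rewrite r_max; first by rewrite X_sz bigmax_nseq // ltnW.
  - exact: identity_nonzero X_id.
  - exact: identity_not_rank_one X_id M_gt1 (ltnW N_gt2).
  - by rewrite X_sz count_nseq M_gt1 mul1n.
have N2 : N = 2%N by apply/anti_leq/andP.
rewrite -(mxrank1 R M); apply: (r_matrix_shaped (k := 0%N)); first by rewrite X_sz N2.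
exact: identity_mx X_id N2.
Qed.

Lemma r_subtensor X Y : is_subtensor Y X -> (r Y <= r X)%N.
Proof.
move=> YX.
have [Y0|NZY] := classic (is_zero_tensor Y); first by rewrite (proj2 (r0 Y) Y0).
have NZX := subtensor_nonzero YX NZY.
have [Y1|NR1Y] := classic (is_rank_one Y).
  by rewrite (proj2 (r1 Y) Y1) lt0n; apply: contra_notN NZX => /eqP /r0.
have NR1X : ~ is_rank_one X by move/(subtensor_rank_one YX NZY).
have [n1 [n2 [n12 n2Y b1 b2]]] := two_big_modes NZY NR1Y.
have n1Y := ltn_trans n12 n2Y; have ne12 : n1 != n2 by rewrite ltn_eqF.
have [YXord _] := YX.
have [n1X n2X] : (n1 < tord X)%N /\ (n2 < tord X)%N by rewrite -YXord.
have bigX n : (n < tord Y)%N -> (1 < tdim Y n)%N -> (1 < tdim X n)%N.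
  by move=> nY /leq_trans; apply; rewrite subtensor_tdim // -YXord.
have [flatY|threeY] := flat_outside_or_three_big_modes ne12 n1Y n2Y b1 b2; last first.
  rewrite r_max // r_max //; first exact: subtensor_bigmax.
  exact: leq_trans threeY (subtensor_big_mode_count YX).
rewrite (r_flat_outside n12 n2Y flatY).
have [flatX|threeX] := flat_outside_or_three_big_modes ne12 n1X n2X (bigX _ n1Y b1) (bigX _ n2Y b2).
  by rewrite (r_flat_outside n12 n2X flatX); exact: subtensor_mode_mx_rank.
rewrite r_max //; apply: leq_trans (rank_leq_row _) _; apply: leq_trans (subtensor_bigmax YX).
by apply: leq_bigmax_seq => //; rewrite mem_nth.
Qed.

End RankFunction.

Theorem proposition3p9 (R : realType) (r : tensor R -> nat)
  (H1a : forall X, r X = 0%N <-> is_zero_tensor X)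
  (H1b : forall X, r X = 1%N <-> is_rank_one X)
  (H2 : forall X Y, tsim X Y -> r X = r Y)
  (H3 : forall X n1 n2 (A : 'M[R]_(tdim X n1, tdim X n2)),
     (n1 < n2)%N -> (n2 < tord X)%N ->
     (1 < tdim X n1)%N -> (1 < tdim X n2)%N ->
     (forall n, (n < tord X)%N -> n != n1 -> n != n2 -> (tdim X n <= 1)%N) ->
     (forall (i : 'I_(tdim X n1)) (j : 'I_(tdim X n2)),
        A i j = tentry X (fun n => if n == n1 then nat_of_ord i
                                   else if n == n2 then nat_of_ord j else 0%N)) ->
     r X = \rank A)
  (H4 : forall X, ~ is_zero_tensor X -> ~ is_rank_one X ->
     (3 <= count (fun k => 1 < k)%N (tsz X))%N ->
     r X = (\max_(k <- tsz X) k)%N) :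
  is_QZC r.
Proof.
split; first exact: H1a.
split; first exact: H1b.
split; first exact: (r_identity H1a H1b H3 H4).
split; first exact: (r_matrix_shaped H1a H1b H3).
split; first by move=> X Y a a_nz XY; symmetry; apply: H2; exact: tsim_scale a_nz XY.
split; first by move=> X Y XY; symmetry; apply: H2; exact: tsim_perm.
exact: (r_subtensor H1a H1b H3 H4).
Qed.
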